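(* Let $N$ be a finite $\Lambda$-module and $l>0$ an integer. There exists a $\Lambda$-module $M$ containing $N$ as a $\Lambda$-submodule with $(1-t)M=N$ and $|M/N|=l$ if and only if $|N/(1-t)N|$ divides $l$.
   Context: $\Lambda=\mathbb Z[t,t^{-1}]$, the ring of Laurent polynomials over $\mathbb Z$. A $\Lambda$-module is an abelian group with an automorphism by which $t$ acts. *)

From HB Require Import structures.
From mathcomp Require Import all_boot all_order all_algebra.
Set Implicit Arguments. Unset Strict Implicit. Unset Printing Implicit Defensive.
Import GRing.Theory.
Local Open Scope ring_scope.

(* A Lambda-module (Lambda = Z[t,t^-1]) is an abelian group M with an
   automorphism t: an additive bijection M -> M. *)
Definition lambda_aut (M : zmodType) (t : M -> M) : Prop :=
  (forall x y : M, t (x + y) = t x + t y) /\ bijective t.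

(* f : N -> M is an injective Lambda-module homomorphism (so N is identified
   with the Lambda-submodule f(N) of M). *)
Definition lambda_embedding (N M : zmodType) (tN : N -> N) (tM : M -> M)
  (f : N -> M) : Prop :=
  (forall x y : N, f (x + y) = f x + f y) /\ injective f /\
  (forall x : N, f (tN x) = tM (f x)).

(* |M / S| = l, for an arbitrary (possibly infinite) abelian group M and a
   subgroup S (given as a predicate): there is a system r_0, ..., r_(l-1)
   of representatives of the cosets of S, each coset hit exactly once. *)
Definition quot_card (M : zmodType) (S : M -> Prop) (l : nat) : Prop :=
  exists r : 'I_l -> M, forall m : M, exists! i : 'I_l, S (m - r i).

From HB Require Import structures.
From mathcomp Require Import all_boot all_order all_algebra all_fingroup.
Set Implicit Arguments. Unset Strict Implicit. Unset Printing Implicit Defensive.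
Import GRing.Theory.
Local Open Scope ring_scope.

(* Let K = (1 - t) N; since 1 - t is additive, |N / K| = |ker_N (1 - t)| =: d.

   Necessity.  Let r_1, ..., r_l represent the cosets of N in M and put
   c_i = (1 - t) r_i, an element of N.  Translating by any m permutes the
   cosets, and moves every class c_i + K to c_i + (1 - t) m + K, where
   (1 - t) m ranges over all of N.  So the classes c_i + K are
   equidistributed in N / K, and double counting gives l = d #{i | c_i \in K}.

   Sufficiency.  Call A \supseteq N tame if (1 - t) A \subseteq N and every
   fixed point of t in A lies in N.  If some n \in N is not in (1 - t) A,
   let c + 1 >= 2 be least with (c + 1) n = (1 - t) a0 for some a0 \in A, and
   adjoin to A a root y of (c + 1) y = a0 with t y = y - n: the result is
   again tame and has a strictly larger (1 - t)-image.  Iterating from A = N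
   yields a tame M0 with (1 - t) M0 = N, hence |M0| = d |N|; adjoining
   finally a cyclic summand of order k with trivial t gives |M / N| = d k. *)

Section AdditiveMaps.
Variables (A B : zmodType) (f : A -> B).
Hypothesis f_add : forall x y, f (x + y) = f x + f y.

Lemma addf0 : f 0 = 0.
Proof. by apply: (addrI (f 0)); rewrite -f_add !addr0. Qed.

Lemma addfN x : f (- x) = - f x.
Proof. by apply: (addrI (f x)); rewrite -f_add !subrr addf0. Qed.

Lemma addfB x y : f (x - y) = f x - f y.
Proof. by rewrite f_add addfN. Qed.

Lemma addfMn x k : f (x *+ k) = f x *+ k.
Proof. by elim: k => [|k IH]; rewrite ?addf0 // !mulrS f_add IH. Qed.

End AdditiveMaps.

Lemma one_minus_t_add (M : zmodType) (t : M -> M) :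
  (forall x y, t (x + y) = t x + t y) ->
  forall x y, (x + y) - t (x + y) = (x - t x) + (y - t y).
Proof. by move=> t_add x y; rewrite t_add opprD addrACA. Qed.

Lemma additive_image_group (A B : finZmodType) (p : A -> B) :
  (forall x y, p (x + y) = p x + p y) -> group_set [set p a | a : A].
Proof.
move=> p_add; apply/group_setP; split.
  by apply/imsetP; exists 0; rewrite ?(addf0 p_add).
move=> _ _ /imsetP [a _ ->] /imsetP [b _ ->].
by apply/imsetP; exists (a + b); rewrite ?p_add.
Qed.

Lemma card_image_kernel (A B : finZmodType) (p : A -> B) :
  (forall x y, p (x + y) = p x + p y) ->
  #|A| = (#|[set p a | a : A]| * #|[set a : A | p a == 0%R]|)%N.
Proof.
move=> p_add; transitivity (\sum_(a : A) 1)%N; first by rewrite sum1_card.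
rewrite (partition_big p (mem [set p a | a : A])) /=; last by move=> a _; apply: imset_f.
rewrite -sum_nat_const; apply: eq_bigr => _ /imsetP [a0 _ ->].
rewrite sum1dep_card.
have -> : [set a | true && (p a == p a0)] = [set a0 + k | k in [set a : A | p a == 0%R]].
  apply/setP => a; rewrite !inE; apply/eqP/imsetP => [pa | [k]].
    by exists (a - a0); [rewrite inE (addfB p_add) pa subrr | rewrite addrC subrK].
  by rewrite inE => /eqP pk ->; rewrite p_add pk addr0.
by rewrite card_imset //; apply: addrI.
Qed.

Section CosetRepresentatives.
Local Open Scope group_scope.

Lemma quot_card_index (M : finZmodType) (H : {group M}) :
  quot_card (fun m : M => m \in H) #|[set: M] : H|.
Proof.
pose C := rcosets H [set: M].
have HmC m : H :* m \in C by apply/rcosetsP; exists m; rewrite ?inE.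
have rep_coset (i : 'I_#|C|) : H :* repr (enum_val i) = enum_val i.
  by have /rcosetsP [x _ ->] := enum_valP i; rewrite rcoset_repr.
exists (fun i : 'I_#|C| => repr (enum_val i)) => m.
exists (enum_rank_in (HmC m) (H :* m)); split.
  by rewrite enum_rankK_in // -mem_rcoset rcoset_repr rcoset_refl.
move=> j; rewrite -[_ \in H]mem_rcoset rep_coset => m_in_j.
have /rcosetsP [x _ j_def] := enum_valP j.
rewrite -(enum_valK_in (HmC m) j); congr enum_rank_in.
by rewrite j_def; apply/rcoset_eqP; rewrite -j_def.
Qed.

End CosetRepresentatives.

Lemma quot_card_embedding (N M : finZmodType) (f : N -> M) (l : nat) :
  (forall x y, f (x + y) = f x + f y) -> injective f -> #|M| = (l * #|N|)%N ->
  quot_card (fun m : M => exists n : N, m = f n) l.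
Proof.
move=> f_add f_inj cardM; pose H := Group (additive_image_group f_add).
have N_gt0 : (0 < #|N|)%N by apply/card_gt0P; exists 0.
have -> : l = #|[set: M] : H|%g.
  have := Lagrange (subsetT H); rewrite cardsT cardM card_imset // mulnC => /eqP.
  by rewrite eqn_pmul2r // => /eqP.
have [r r_rep] := quot_card_index H; exists r => m.
have [i [/imsetP [n _ mn] i_uniq]] := r_rep m; exists i; split; first by exists n.
by move=> j [n' mj]; apply: i_uniq; rewrite mj; apply: imset_f.
Qed.

(* The group A[y] generated by A and a new element y subject to
   (c + 1) y = n0.  Its elements are written uniquely a + i y with
   0 <= i <= c, i.e. as pairs (a, i); adding the digits carries multiples
   of n0 into the first component.  The dummy argument n0 of ext keeps the
   group structures for different n0 apart. *)
Section CyclicExtension.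
Variables (A : finZmodType) (c : nat) (n0 : A).

Definition ext (_ : A) : Type := (A * 'I_c.+1)%type.
Local Notation E := (ext n0).
HB.instance Definition _ := Finite.on E.

(* a + s y, in normal form. *)
Definition ext_norm (a : A) (s : nat) : E :=
  (a + n0 *+ (s %/ c.+1), Ordinal (ltn_pmod s (ltn0Sn c))).
Definition ext_add (u v : E) : E := ext_norm (u.1 + v.1) (u.2 + v.2).
Definition ext_opp (u : E) : E :=
  (- u.1 - n0 *+ (0 < u.2)%N, Ordinal (ltn_pmod (c.+1 - u.2) (ltn0Sn c))).
Definition ext_zero : E := (0, ord0).

Lemma ext_add_normE a s (u : E) :
  ext_add (ext_norm a s) u = ext_norm (a + u.1) (s + u.2).
Proof.
rewrite /ext_add /ext_norm /=; congr pair; last by apply: val_inj; rewrite /= modnDml.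
rewrite -!addrA [n0 *+ _ + (_ + _)]addrCA -mulrnDr; congr (_ + (_ + _ *+ _)).
by rewrite [in RHS](divn_eq s c.+1) -addnA divnMDl.
Qed.

Lemma ext_addC : commutative ext_add.
Proof. by move=> u v; rewrite /ext_add addrC addnC. Qed.

Lemma ext_addA : associative ext_add.
Proof.
move=> u v w; rewrite [ext_add u (ext_add _ _)]ext_addC [ext_add v w]/ext_add.
by rewrite [ext_add u v]/ext_add !ext_add_normE addrC addrA addnC addnA.
Qed.

Lemma ext_add0 : left_id ext_zero ext_add.
Proof.
case=> a i; rewrite /ext_add /ext_norm /= !add0r add0n divn_small // addr0.
by congr pair; apply: val_inj; rewrite /= modn_small.
Qed.

Lemma ext_carry_opp (i : 'I_c.+1) :
  (0 < i)%N -> ((c.+1 - i) %% c.+1 = c.+1 - i /\ (c.+1 - i) + i = c.+1)%N.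
Proof.
case: i => [[|i] //= hi] _; split; last by rewrite subnK // ltnW.
by rewrite modn_small // ltn_subrL.
Qed.

Lemma ext_addN : left_inverse ext_zero ext_opp ext_add.
Proof.
case=> a i; rewrite /ext_add /ext_norm /=; have [->|i_gt0] := posnP i.
  rewrite subn0 modnn addn0 div0n mulr0n subr0 addNr addr0; congr pair.
  by apply: val_inj; rewrite /= mod0n.
have [-> ->] := ext_carry_opp i_gt0; rewrite divnn /= mulr1n.
rewrite [- a - n0 + a]addrAC addNr add0r addNr; congr pair.
by apply: val_inj; rewrite /= modnn.
Qed.

HB.instance Definition _ := GRing.isZmodule.Build E ext_addA ext_addC ext_add0 ext_addN.

Lemma ext_addE (u v : E) : u + v = ext_add u v. Proof. by []. Qed.
Lemma ext_oppE (u : E) : - u = ext_opp u. Proof. by []. Qed.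

Lemma card_ext : #|{: E}| = (#|A| * c.+1)%N.
Proof. by rewrite card_prod card_ord. Qed.

End CyclicExtension.

(* If (1 - t) n0 = (c + 1) x, then t extends to A[y] by t y = y - x, i.e.
   t (a, i) = (t a - i x, i); A embeds as the pairs (a, 0), and
   (1 - t) (a, i) = (1 - t) a + i x lies in A. *)
Section CyclicExtensionAut.
Variables (A : finZmodType) (tA : A -> A) (c : nat) (x n0 : A).
Hypotheses (tA_add : forall a b, tA (a + b) = tA a + tA b) (tA_inj : injective tA).
Hypothesis n0_def : n0 - tA n0 = x *+ c.+1.
Local Notation E := (ext c n0).

Definition ext_t (u : E) : E := (tA u.1 - x *+ u.2, u.2).
Definition ext_emb (a : A) : E := (a, ord0).

Lemma ext_embD a b : ext_emb (a + b) = ext_emb a + ext_emb b.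
Proof.
rewrite ext_addE /ext_add /ext_norm /= div0n mulr0n addr0; congr pair.
by apply: val_inj; rewrite /= mod0n.
Qed.

Lemma ext_emb_inj : injective ext_emb.
Proof. by move=> a b []. Qed.

Lemma ext_emb_t a : ext_emb (tA a) = ext_t (ext_emb a).
Proof. by rewrite /ext_t /= mulr0n subr0. Qed.

(* Additivity of ext_t is where the hypothesis on n0 is used: a carry of
   n0 in the sum is matched by t n0 = n0 - (c + 1) x. *)
Lemma ext_tD u v : ext_t (u + v) = ext_t u + ext_t v.
Proof.
rewrite ext_addE /ext_add /ext_norm /ext_t /=; congr pair.
set s := (u.2 + v.2)%N.
have tn0 : tA n0 = n0 - x *+ c.+1 by rewrite -n0_def opprB addrC subrK.
rewrite !tA_add (addfMn tA_add) tn0 mulrnBl -mulrnA addrA -[X in X = _]addrA.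
rewrite -opprD -mulrnDr mulnC -divn_eq (addrACA (tA u.1)) -opprD -mulrnDr.
by rewrite addrAC.
Qed.

Lemma ext_t_inj : injective ext_t.
Proof.
by case=> a i [b j] [eq1 eq2]; move: eq1; rewrite eq2 => /addIr /tA_inj ->.
Qed.

Lemma ext_one_minus_t (u : E) : u - ext_t u = ext_emb (u.1 - tA u.1 + x *+ u.2).
Proof.
case: u => a i; rewrite ext_addE ext_oppE /ext_add /ext_opp /ext_norm /ext_t /ext_emb /=.
have [->|i_gt0] := posnP i.
  rewrite subn0 modnn addn0 div0n !mulr0n !subr0 addr0; congr pair.
  by apply: val_inj; rewrite /= mod0n.
have [-> e] := ext_carry_opp i_gt0; rewrite [(i + _)%N]addnC e divnn /= mulr1n.
rewrite addrA subrK opprB addrA addrAC; congr pair.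
by apply: val_inj; rewrite /= modnn.
Qed.

End CyclicExtensionAut.

Lemma adjoin_root (A : finZmodType) (tA : A -> A) (hA : lambda_aut tA) (c : nat)
    (x n0 : A) (n0_def : n0 - tA n0 = x *+ c.+1) :
  exists (B : finZmodType) (tB : B -> B) (g : A -> B),
  [/\ lambda_aut tB, lambda_embedding tA tB g, #|B| = (#|A| * c.+1)%N,
      forall a (i : 'I_c.+1), exists b : B, b - tB b = g (a - tA a + x *+ i) &
      forall b : B, exists a (i : 'I_c.+1),
        b - tB b = g (a - tA a + x *+ i) /\ ((i : nat) = 0%N -> b = g a)].
Proof.
have [tA_add /bij_inj tA_inj] := hA.
exists (ext c n0), (@ext_t A tA c x n0), (@ext_emb A c n0); split.
- by split; [exact: ext_tD | apply: injF_bij; exact: ext_t_inj].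
- by split; [exact: ext_embD | split; [exact: ext_emb_inj | exact: ext_emb_t]].
- exact: card_ext.
- by move=> a i; exists (a, i); rewrite ext_one_minus_t.
case=> a i; exists a, i; split; first exact: ext_one_minus_t.
by move=> i0; congr pair; apply: val_inj.
Qed.

Lemma least_multiple_in (A : finZmodType) (K : {set A}) (x : A) :
  0 \in K -> x \notin K ->
  exists2 c, (1 < c)%N & x *+ c \in K /\ forall i, (0 < i < c)%N -> x *+ i \notin K.
Proof.
move=> K0 xK; pose P i := (0 < i)%N && (x *+ i \in K).
have [|c /andP [c_gt0 xcK] c_min] := ex_minnP (ex_intro P #[x]%g _).
  by rewrite /P order_gt0 /=; have -> : x *+ #[x]%g = 0 by exact: expg_order.
exists c; last split => // i /andP [i_gt0 i_lt_c]; last first.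
  by apply: contraL i_lt_c => xiK; rewrite -leqNgt c_min // /P i_gt0.
rewrite ltn_neqAle c_gt0 andbT; apply: contraNneq xK => c1.
by rewrite -[x]mulr1n c1.
Qed.

Lemma lambda_embedding_comp (N A B : zmodType) (tN : N -> N) (tA : A -> A)
    (tB : B -> B) (f : N -> A) (g : A -> B) :
  lambda_embedding tN tA f -> lambda_embedding tA tB g ->
  lambda_embedding tN tB (g \o f).
Proof.
move=> [f_add [f_inj f_t]] [g_add [g_inj g_t]]; split => [u v|] /=.
  by rewrite f_add g_add.
by split; [exact: inj_comp | move=> u /=; rewrite f_t g_t].
Qed.

Definition tame_ext (N A : zmodType) (tN : N -> N) (tA : A -> A) (f : N -> A) :=
  [/\ lambda_aut tA, lambda_embedding tN tA f,
      forall a, exists n, a - tA a = f n &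
      forall a, a - tA a = 0 -> exists n, a = f n].

Section TameExtension.
Variables (N A : finZmodType) (tN : N -> N) (tA : A -> A) (f : N -> A).
Hypothesis tame : tame_ext tN tA f.
Local Notation K := [set a - tA a | a : A].

Lemma tame_image_card : (#|K| <= #|N|)%N.
Proof.
have [_ _ f_im _] := tame; apply: leq_trans (leq_imset_card f _).
apply/subset_leq_card/subsetP => _ /imsetP [a _ ->].
by have [n ->] := f_im a; apply: imset_f.
Qed.

(* Growth step: if n \in N is not in (1 - t) A, adjoin a root y of
   (c + 1) y = a0 with t y = y - n, where (c + 1) n = (1 - t) a0 is the
   least positive multiple of n in (1 - t) A.  Minimality of c keeps the
   extension tame; the new element (1 - t) y = n enlarges the image. *)
Lemma tame_ext_grow (n : N) : f n \notin K ->
  exists (B : finZmodType) (tB : B -> B) (g : N -> B),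
    tame_ext tN tB g /\ (#|K| < #|[set (b - tB b)%R | b : B]|)%N.
Proof.
have [hA hf f_im f_ker] := tame; have [tA_add _] := hA.
have [f_add _] := hf; set x := f n => xK.
have K0 : 0 \in K by apply/imsetP; exists 0; rewrite ?(addf0 tA_add) ?subr0.
have [c c_gt1 [/imsetP [a0 _ a0_def] c_min]] := least_multiple_in K0 xK.
case: c c_gt1 a0_def c_min => // c c_gt1 a0_def c_min.
have [B [tB [g [hB hg _ B_im B_im_inv]]]] := adjoin_root hA (esym a0_def).
have [g_add [g_inj g_t]] := hg.
exists B, tB, (g \o f); split; first split => //.
- exact: (lambda_embedding_comp hf hg).
- move=> b; have [a [i [-> _]]] := B_im_inv b; have [n1 ->] := f_im a.
  by exists (n1 + n *+ i) => /=; rewrite f_add (addfMn f_add).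
- move=> b b_fix; have [a [i [b_im b_A]]] := B_im_inv b.
  have ai0 : a - tA a + x *+ i = 0 by apply: g_inj; rewrite -b_im b_fix (addf0 g_add).
  have [i0 | i_gt0] := posnP i.
    by move: ai0; rewrite i0 addr0 b_A // => /f_ker [n1 ->]; exists n1.
  have i_range : (0 < i < c.+1)%N by rewrite i_gt0 ltn_ord.
  case/negP: (c_min i i_range); apply/imsetP; exists (- a) => //.
  by rewrite (addfN tA_add) opprK addrC -opprB; apply/eqP; rewrite -addr_eq0 addrC ai0.
have gK : g @: K \subset [set b - tB b | b : B].
  apply/subsetP => _ /imsetP [_ /imsetP [a _ ->] ->].
  by apply/imsetP; exists (g a); rewrite ?(addfB g_add) ?g_t.
rewrite -(card_imset _ g_inj); apply: proper_card; rewrite properEneq gK andbT.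
have [b0 b0_def] := B_im 0 (Ordinal c_gt1).
have gx_new : g x \in [set (b - tB b)%R | b : B].
  by apply/imsetP; exists b0; rewrite // b0_def (addf0 tA_add) subr0 add0r mulr1n.
by apply/eqP => eqK; move: gx_new; rewrite -eqK (mem_imset _ _ g_inj) (negbTE xK).
Qed.

End TameExtension.

(* Saturation: iterating the growth step, whose measure |N| - |(1 - t) A|
   decreases, yields a tame extension whose (1 - t)-image is all of N. *)
Lemma tame_ext_saturate (N A : finZmodType) (tN : N -> N) (tA : A -> A) (f : N -> A) :
  tame_ext tN tA f ->
  exists (M : finZmodType) (tM : M -> M) (g : N -> M),
    tame_ext tN tM g /\ forall n, exists m, g n = m - tM m.
Proof.
move=> tame; have [k] := ubnP (#|N| - #|[set (a - tA a)%R | a : A]|).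
elim: k A tA f tame => // k IH A tA f tame gap.
have [/forallP all_in | /forallPn [n n_out]] :=
  boolP [forall n, f n \in [set (a - tA a)%R | a : A]].
  by exists A, tA, f; split => // n; have /imsetP [a _ ->] := all_in n; exists a.
have [B [tB [g [tameB grow]]]] := tame_ext_grow tame n_out.
apply: (IH B tB g tameB); rewrite -ltnS; apply: leq_trans gap.
by rewrite ltnS ltn_sub2l // (leq_trans grow) // (tame_image_card tameB).
Qed.

(* A saturated tame extension M has |M| = |N| |ker_N (1 - t)|: by
   card_image_kernel, as (1 - t) M = N and ker_M (1 - t) = ker_N (1 - t). *)
Lemma card_saturated (N M : finZmodType) (tN : N -> N) (tM : M -> M) (f : N -> M) :
  tame_ext tN tM f -> (forall n, exists m, f n = m - tM m) ->
  #|M| = (#|N| * #|[set n : N | (n - tN n == 0)%R]|)%N.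
Proof.
move=> [[tM_add _] [f_add [f_inj f_t]] f_im f_ker] f_sub.
have := card_image_kernel (one_minus_t_add tM_add) => /= ->.
rewrite -[X in (_ = X * _)%N](card_imset _ f_inj) -[X in (_ = _ * X)%N](card_imset _ f_inj).
congr (_ * _)%N; apply: eq_card => m.
  apply/imsetP/imsetP => -[y _ ->].
    by have [n ->] := f_im y; exists n.
  by have [m' ->] := f_sub y; exists m'.
rewrite inE; apply/eqP/imsetP => [m_fix | [n]].
  have [n mn] := f_ker m m_fix; exists n; rewrite // inE; apply/eqP/f_inj.
  by rewrite (addfB f_add) f_t -mn m_fix (addf0 f_add).
by rewrite inE => /eqP n_fix ->; rewrite -f_t -(addfB f_add) n_fix (addf0 f_add).
Qed.

(* Sufficiency: for every k > 0 there is a finite M \supseteq N with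
   (1 - t) M = N and |M| = |N| |ker_N (1 - t)| k: saturate N, then adjoin
   a cyclic summand of order k on which t is trivial (x = n0 = 0). *)
Lemma extension_of_size (N : finZmodType) (tN : N -> N) (hN : lambda_aut tN) (k : nat) :
  exists (M : finZmodType) (tM : M -> M) (f : N -> M),
  [/\ lambda_aut tM, lambda_embedding tN tM f,
      forall m, exists n, m - tM m = f n,
      forall n, exists m, f n = m - tM m &
      #|M| = (#|N| * #|[set n : N | (n - tN n == 0)%R]| * k.+1)%N].
Proof.
have tameN : tame_ext tN tN id.
  by split=> //; [split=> //; split | move=> a; exists (a - tN a) | move=> a _; exists a].
have [M0 [tM0 [f0 [tameM0 f0_sub]]]] := tame_ext_saturate tameN.
have [hM0 hf0 f0_im _] := tameM0; have [tM0_add _] := hM0.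
have zero_def : (0 : M0) - tM0 0 = 0 *+ k.+1 by rewrite (addf0 tM0_add) subr0 mul0rn.
have [M [tM [g [hM hg cardM _ g_im_inv]]]] := adjoin_root hM0 zero_def.
have [g_add [_ g_t]] := hg.
exists M, tM, (g \o f0); split => //.
- exact: (lambda_embedding_comp hf0 hg).
- move=> m; have [a [i [-> _]]] := g_im_inv m; have [n ->] := f0_im a.
  by exists n; rewrite mul0rn addr0.
- move=> n /=; have [m0 ->] := f0_sub n; exists (g m0).
  by rewrite (addfB g_add) g_t.
by rewrite cardM (card_saturated tameM0 f0_sub).
Qed.

Lemma quot_card_translate (M : zmodType) (S : M -> Prop) (l : nat) (r : 'I_l -> M) :
  S 0 -> (forall a b, S a -> S b -> S (a - b)) ->
  (forall m, exists! i, S (m - r i)) ->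
  forall m, exists2 sigma : 'I_l -> 'I_l,
    injective sigma & forall i, S (r i + m - r (sigma i)).
Proof.
move=> S0 S_sub r_rep m.
have [sigma sigmaP] : exists sigma : 'I_l -> 'I_l, forall i, S (r i + m - r (sigma i)).
  apply: (@fin_all_exists _ (fun=> 'I_l) (fun i j => S (r i + m - r j))) => i.
  by have [j [rj _]] := r_rep (r i + m); exists j.
exists sigma => // i i' eq_sigma; have [i0 [_ i0_uniq]] := r_rep (r i).
rewrite -(i0_uniq i) ?subrr // -(i0_uniq i') //.
have shift (a b d : M) : (a + d) - (b + d) = a - b by rewrite [b + d]addrC addrKA.
by have := S_sub _ _ (sigmaP i) (sigmaP i'); rewrite eq_sigma !shift.
Qed.

Lemma card_set_sum (T : finType) (P : pred T) :
  #|[set x | P x]| = (\sum_(x : T) (P x : nat))%N.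
Proof. by rewrite -sum1dep_card big_mkcond; apply: eq_bigr => x _; case: (P x). Qed.

(* Double counting: if for every n some injection sigma of 'I_l moves each
   class c i + K to c (sigma i) + K = c i + n + K, the classes are
   equidistributed, and l |K| = |N| #{i | c i \in K}. *)
Lemma translation_count (N : finZmodType) (K : {group N}) (l : nat) (c : 'I_l -> N) :
  (forall n, exists2 sigma : 'I_l -> 'I_l,
     injective sigma & forall i, c (sigma i) - (c i + n) \in K) ->
  (l * #|K| = #|N| * #|[set i | c i \in K]|)%N.
Proof.
move=> shift.
have KD u v : u \in K -> v \in K -> u + v \in K := @groupM _ K u v.
have KB u v : u \in K -> v \in K -> u - v \in K.
  by move=> Ku Kv; apply: KD; rewrite // -[- v]/(v^-1)%g groupV.
pose a n := #|[set i | c i - n \in K]|.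
have a_const n : a n = a 0.
  have [sigma sigma_inj sigmaP] := shift n.
  rewrite /a -(card_preimset _ sigma_inj); apply: eq_card => i; rewrite !inE subr0.
  have k_def : c (sigma i) - n = (c (sigma i) - (c i + n)) + c i.
    by rewrite opprD addrA addrAC subrK.
  apply/idP/idP => [Kn | Ki]; last by rewrite k_def; apply: KD.
  have -> : c i = (c (sigma i) - n) - (c (sigma i) - (c i + n)).
    by rewrite k_def addrC addKr.
  exact: KB.
have row i : #|[set n | c i - n \in K]| = #|K|.
  have -> : [set n | c i - n \in K] = [set c i - k | k in K].
    apply/setP => n; rewrite inE; apply/idP/imsetP => [Kn | [k Kk ->]].
      by exists (c i - n); rewrite // opprB addrC subrK.
    by rewrite opprB addrC subrK.
  by rewrite card_imset // => u v /addrI /oppr_inj.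
transitivity (\sum_(i < l) #|[set n | (c i - n)%R \in K]|)%N.
  by rewrite (eq_bigr _ (fun i _ => row i)) sum_nat_const card_ord.
transitivity (\sum_(n : N) a n)%N.
  rewrite /a; under eq_bigr do rewrite card_set_sum.
  by under [in RHS]eq_bigr do rewrite card_set_sum; exact: exchange_big.
rewrite (eq_bigr _ (fun n _ => a_const n)) sum_nat_const; congr (_ * _)%N.
by apply: eq_card => i; rewrite !inE subr0.
Qed.

(* Necessity: with r_i representing M / N and c_i = (1 - t) r_i, translating
   by m with (1 - t) m = n shifts the classes c_i + K by n, so
   translation_count applies with K = (1 - t) N; and |N| = |K| |ker_N (1 - t)|. *)
Lemma divisibility_necessary (N : finZmodType) (tN : N -> N) (hN : lambda_aut tN)
    (l : nat) (M : zmodType) (tM : M -> M) (f : N -> M) :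
  lambda_aut tM -> lambda_embedding tN tM f ->
  (forall m, exists n, m - tM m = f n) -> (forall n, exists m, f n = m - tM m) ->
  quot_card (fun m => exists n, m = f n) l ->
  (#|N| %/ #|[set (x - tN x)%R | x : N]| %| l)%N.
Proof.
move=> [tM_add _] [f_add [f_inj f_t]] f_im f_sub [r r_rep]; have [tN_add _] := hN.
have tM_diffB := addfB (one_minus_t_add tM_add).
pose K := Group (additive_image_group (one_minus_t_add tN_add)).
have [c c_def] : exists c : 'I_l -> N, forall i, r i - tM (r i) = f (c i).
  apply: (@fin_all_exists _ (fun=> N) (fun i n => r i - tM (r i) = f n)) => i.
  exact: f_im.
have shift n : exists2 sigma : 'I_l -> 'I_l,
    injective sigma & forall i, c (sigma i) - (c i + n) \in K.
  have [m fn] := f_sub n.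
  have S0 : exists n, 0 = f n by exists 0; rewrite (addf0 f_add).
  have S_sub a b : (exists n, a = f n) -> (exists n, b = f n) -> exists n, a - b = f n.
    by move=> [n1 ->] [n2 ->]; exists (n1 - n2); rewrite (addfB f_add).
  have [sigma sigma_inj sigmaP] := quot_card_translate S0 S_sub r_rep m.
  exists sigma => // i; have [n1 n1_def] := sigmaP i.
  have r_sigma : r (sigma i) = r i + m - f n1 by rewrite -n1_def opprB addrC subrK.
  have -> : c (sigma i) - (c i + n) = - (n1 - tN n1).
    apply: f_inj; rewrite (addfN f_add) !(addfB f_add) f_add f_t -!c_def fn r_sigma.
    by rewrite tM_diffB (one_minus_t_add tM_add) addrAC subrr add0r.
  by rewrite -[- _]/((n1 - tN n1)^-1)%g groupV; apply: imset_f.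
have K_gt0 : (0 < #|[set (x - tN x)%R | x : N]|)%N := cardG_gt0 K.
have := translation_count shift.
have := card_image_kernel (one_minus_t_add tN_add) => /= cardN.
rewrite /= cardN mulKn // -mulnA [(l * _)%N]mulnC => /eqP.
by rewrite eqn_pmul2l // => /eqP ->; apply: dvdn_mulr.
Qed.

Theorem mainTheorem8 (N : finZmodType) (tN : N -> N) (hN : lambda_aut tN)
  (l : nat) (hl : (0 < l)%N) :
  (exists (M : zmodType) (tM : M -> M) (f : N -> M),
      [/\ lambda_aut tM, lambda_embedding tN tM f,
          (* (1 - t) M = N *)
          (forall m : M, exists n : N, m - tM m = f n),
          (forall n : N, exists m : M, f n = m - tM m) &
          (* |M / N| = l *)
          quot_card (fun m : M => exists n : N, m = f n) l])
  <-> ((#|N| %/ #|[set (x - tN x)%R | x : N]|) %| l)%N.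
Proof.
split=> [[M [tM [f [hM hf f_im f_sub M_quot]]]] | /dvdnP [k l_def]].
  exact: divisibility_necessary f_im f_sub M_quot.
have [tN_add _] := hN.
have cardN := card_image_kernel (one_minus_t_add tN_add); rewrite /= in cardN.
have K_gt0 : (0 < #|[set (x - tN x)%R | x : N]|)%N.
  exact: cardG_gt0 (Group (additive_image_group (one_minus_t_add tN_add))).
move: l_def hl; rewrite {1}cardN mulKn //; case: k => [-> // | k l_def _].
have [M [tM [f [hM hf f_im f_sub cardM]]]] := extension_of_size hN k.
exists M, tM, f; split => //; have [f_add [f_inj _]] := hf.
by apply: quot_card_embedding f_add f_inj _; rewrite cardM l_def [RHS]mulnC mulnA mulnAC.
Qed.
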